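(* If distribution $\mathcal D$ stochastically dominates distribution $\mathcal D'$ (both with finite support), then ${\sf MBRev}(\mathcal D)\ge{\sf MBRev}(\mathcal D')$.
   Context: $\mathcal D$ stochastically dominates $\mathcal D'$ if $\Pr_{u\sim\mathcal D}[u\ge t]\ge\Pr_{u\sim\mathcal D'}[u\ge t]$ for all $t$. For a finitely supported distribution with support $v_1<\dots<v_m$ and $\Pr[v_i]=q_i>0$, ${\sf MBRev}$ is the optimal value of the LP: maximize $\sum_i q_i(v_ix_i-u_i)$ subject to $u_i\ge(v_i-v_j)x_j$ for all $i>j$, $u_i\ge0$, $0\le x_i\le1$. Equivalently ${\sf MBRev}=\max_{x}\mathbb E_{v_i}[v_ix_i-\max_{j<i}(v_i-v_j)x_j]$ (max over $j<i$ of an empty set taken as $0$, and terms negative replaced by $0$ through $u_i\ge0$). *)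

From HB Require Import structures.
From mathcomp Require Import all_boot all_order all_algebra.
Set Implicit Arguments. Unset Strict Implicit. Unset Printing Implicit Defensive.
Import Order.TTheory GRing.Theory Num.Theory.
Local Open Scope ring_scope.

Definition is_fin_dist (R : realFieldType) (m : nat) (v q : 'I_m -> R) : Prop :=
  (forall i j : 'I_m, (i < j)%N -> v i < v j) /\
  (forall i : 'I_m, 0 < q i) /\
  \sum_(i < m) q i = 1.

Definition tail_prob (R : realFieldType) (m : nat) (v q : 'I_m -> R) (t : R) : R :=
  \sum_(i < m | t <= v i) q i.

Definition stoch_dominates (R : realFieldType) (m : nat) (v q : 'I_m -> R)
    (m' : nat) (v' q' : 'I_m' -> R) : Prop :=
  forall t : R, tail_prob v' q' t <= tail_prob v q t.

Definition MB_feasible (R : realFieldType) (m : nat) (v : 'I_m -> R)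
    (x u : 'I_m -> R) : Prop :=
  (forall i j : 'I_m, (j < i)%N -> (v i - v j) * x j <= u i) /\
  (forall i : 'I_m, 0 <= u i) /\
  (forall i : 'I_m, 0 <= x i <= 1).

Definition MB_obj (R : realFieldType) (m : nat) (v q : 'I_m -> R)
    (x u : 'I_m -> R) : R :=
  \sum_(i < m) q i * (v i * x i - u i).

Definition is_MBRev (R : realFieldType) (m : nat) (v q : 'I_m -> R) (r : R) : Prop :=
  (exists x u : 'I_m -> R, MB_feasible v x u /\ MB_obj v q x u = r) /\
  (forall x u : 'I_m -> R, MB_feasible v x u -> MB_obj v q x u <= r).

From HB Require Import structures.
From mathcomp Require Import all_boot all_order all_algebra.
From mathcomp Require Import lra.
Import Order.TTheory GRing.Theory Num.Theory.
Local Open Scope ring_scope.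

(* Extend an optimal solution (x', u') of the LP for D' to every value t:
   among the types k of D' with 0 <= v'_k <= t, let ext_alloc t be the largest
   allocation x'_k and ext_util t the largest utility (t - v'_k) x'_k that
   type k's allocation would give a buyer of value t.  The revenue curve
   ext_rev t = t ext_alloc t - ext_util t is nonnegative and nondecreasing,
   dominates the objective of (x', u') pointwise on the support of D', and its
   restriction to the support of D is LP-feasible for D.  Hence
   r' <= E_D'[ext_rev] <= E_D[ext_rev] <= r, the middle step being stochastic
   dominance, applied to ext_rev written as a nonnegative combination of the
   threshold indicators [t <= y] for t in the support of D'. *)

Section Staircase.
Context {R : realDomainType} {f : R -> R}.
Hypotheses (f_ge0 : forall t, 0 <= f t) (f_nondecr : {homo f : s t / s <= t}).

Lemma staircase_decomposition (s : seq R) : sorted >%R s ->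
  exists c : R -> R, [/\ forall t, 0 <= c t,
    forall y, \sum_(t <- s | t <= y) c t <= f y &
    {in s, forall y, \sum_(t <- s | t <= y) c t = f y}].
Proof.
elim: s => [_ | a s IHs a_s_sorted].
  by exists (fun=> 0); split=> // y; rewrite big_nil.
have s_lt_a : {in s, forall t, t < a}.
  exact/allP/(order_path_min (rev_trans lt_trans) a_s_sorted).
have [c' [c'_ge0 c'_le c'_eq]] := IHs (path_sorted a_s_sorted).
have sum_s_below y : a <= y -> \sum_(t <- s | t <= y) c' t = \sum_(t <- s) c' t.
  move=> a_le_y; rewrite big_mkcond; apply: eq_big_seq => t /s_lt_a t_lt_a.
  by rewrite (ltW (lt_le_trans t_lt_a a_le_y)).
have sum_s_le_a : \sum_(t <- s) c' t <= f a by rewrite -(sum_s_below a).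
pose c t := if t == a then f a - \sum_(t <- s) c' t else c' t.
have sum_c_s P : \sum_(t <- s | P t) c t = \sum_(t <- s | P t) c' t.
  rewrite [LHS]big_mkcond [RHS]big_mkcond; apply: eq_big_seq => t /s_lt_a t_lt_a.
  by rewrite /c lt_eqF.
have sum_c y : \sum_(t <- a :: s | t <= y) c t =
    if a <= y then f a else \sum_(t <- s | t <= y) c' t.
  by rewrite big_cons sum_c_s /c eqxx; case: ifP => // /sum_s_below->; rewrite subrK.
exists c; split.
- by move=> t; rewrite /c; case: ifP; rewrite ?subr_ge0.
- by move=> y; rewrite sum_c; case: ifP => [/f_nondecr|].
- move=> y; rewrite inE sum_c => /predU1P[-> | y_s]; first by rewrite lexx.
  by rewrite leNgt s_lt_a //= c'_eq.
Qed.

End Staircase.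

Lemma sum_staircase_tail {R : realFieldType} {m : nat} (v q : 'I_m -> R)
    (s : seq R) (c : R -> R) :
  \sum_i q i * \sum_(t <- s | t <= v i) c t = \sum_(t <- s) c t * tail_prob v q t.
Proof.
under eq_bigr => i _ do rewrite mulr_sumr big_mkcond /=.
rewrite exchange_big; apply: eq_bigr => t _.
rewrite /tail_prob mulr_sumr [RHS]big_mkcond; apply: eq_bigr => i _.
by case: ifP; rewrite ?mulr0 // mulrC.
Qed.

Lemma sorted_gt_rev_image {R : realFieldType} {m : nat} {v : 'I_m -> R} :
  (forall i j : 'I_m, (i < j)%N -> v i < v j) ->
  sorted >%R (rev [seq v i | i <- enum 'I_m]).
Proof.
move=> v_incr; rewrite rev_sorted.
apply: (homo_sorted (e := fun i j : 'I_m => (i < j)%N)) => [i j /v_incr //|].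
by have := iota_ltn_sorted 0 m; rewrite -val_enum_ord sorted_map.
Qed.

Lemma expectation_le_of_dominates {R : realFieldType}
    {m : nat} {v q : 'I_m -> R} {m' : nat} {v' q' : 'I_m' -> R} {f : R -> R} :
  (forall i j : 'I_m', (i < j)%N -> v' i < v' j) -> (forall i, 0 <= q i) ->
  stoch_dominates v q v' q' ->
  (forall t, 0 <= f t) -> {homo f : s t / s <= t} ->
  \sum_k q' k * f (v' k) <= \sum_i q i * f (v i).
Proof.
move=> v'_incr q_ge0 dom f_ge0 f_nondecr.
set s := rev [seq v' k | k <- enum 'I_m'].
have [c [c_ge0 c_le c_eq]] :=
  staircase_decomposition f_ge0 f_nondecr s (sorted_gt_rev_image v'_incr).
have -> : \sum_k q' k * f (v' k) = \sum_k q' k * \sum_(t <- s | t <= v' k) c t.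
  by apply: eq_bigr => k _; rewrite c_eq // mem_rev map_f ?mem_enum.
apply: le_trans (_ : \sum_i q i * \sum_(t <- s | t <= v i) c t <= _); last first.
  by apply: ler_sum => i _; rewrite ler_wpM2l ?c_le.
rewrite !sum_staircase_tail; apply: ler_sum => t _.
by rewrite ler_wpM2l ?c_ge0 ?dom.
Qed.

Section ExtendedMechanism.
Context {R : realFieldType} {m' : nat} (v' x' : 'I_m' -> R).
Hypothesis x'_range : forall k, 0 <= x' k <= 1.

(* Types of negative value are left out, which keeps ext_rev nonnegative. *)
Let offered (t : R) (k : 'I_m') := (0 <= v' k) && (v' k <= t).

Definition ext_alloc (t : R) : R := \big[Num.max/0]_(k | offered t k) x' k.

Definition ext_util (t : R) : R :=
  \big[Num.max/0]_(k | offered t k) ((t - v' k) * x' k).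

Definition ext_rev (t : R) : R := t * ext_alloc t - ext_util t.

Lemma ext_alloc_ge0 t : 0 <= ext_alloc t.
Proof. exact: bigmax_ge_id. Qed.

Lemma ext_util_ge0 t : 0 <= ext_util t.
Proof. exact: bigmax_ge_id. Qed.

Lemma ext_alloc_le1 t : ext_alloc t <= 1.
Proof. by apply: bigmax_le => // k _; case/andP: (x'_range k). Qed.

Lemma le_ext_alloc t k : 0 <= v' k -> v' k <= t -> x' k <= ext_alloc t.
Proof. by move=> v'k_ge0 v'k_le_t; apply: le_bigmax_cond; apply/andP. Qed.

Lemma le_ext_util t k : 0 <= v' k -> (t - v' k) * x' k <= ext_util t.
Proof.
move=> v'k_ge0; have [v'k_le_t | t_lt_v'k] := leP (v' k) t.
  by apply: le_bigmax_cond; apply/andP.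
have [x'k_ge0 _] := andP (x'_range k).
by apply: le_trans (ext_util_ge0 t); rewrite mulr_le0_ge0 // subr_le0 ltW.
Qed.

Lemma ext_alloc_util_neg {t} : t < 0 -> ext_alloc t = 0 /\ ext_util t = 0.
Proof.
move=> t_lt0; have none k : offered t k = false.
  by apply/andP=> -[/le_trans le_t /le_t]; rewrite leNgt t_lt0.
by rewrite /ext_alloc /ext_util !big_pred0.
Qed.

Lemma ext_alloc_nondecr : {homo ext_alloc : s t / s <= t}.
Proof.
move=> s t s_le_t; apply: bigmax_le => [|k /andP[v'k_ge0 v'k_le_s]].
  exact: ext_alloc_ge0.
exact: le_ext_alloc (le_trans v'k_le_s s_le_t).
Qed.

Lemma ext_util_ge_deviation s t : s <= t -> (t - s) * ext_alloc s <= ext_util t.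
Proof.
move=> s_le_t; rewrite /ext_alloc.
elim/big_ind: _ => [|a b ha hb|k /andP[v'k_ge0 v'k_le_s]].
- by rewrite mulr0 ext_util_ge0.
- by rewrite maxr_pMr ?subr_ge0 // ge_max ha hb.
- have [x'k_ge0 _] := andP (x'_range k).
  apply: le_trans (le_ext_util t k v'k_ge0).
  by rewrite ler_wpM2r // lerB.
Qed.

Lemma ext_rev_ge0 t : 0 <= ext_rev t.
Proof.
have [t_lt0 | t_ge0] := ltP t 0.
  by rewrite /ext_rev; have [-> ->] := ext_alloc_util_neg t_lt0; rewrite mulr0 subr0.
rewrite subr_ge0; apply: bigmax_le => [|k /andP[v'k_ge0 v'k_le_t]].
  by rewrite mulr_ge0 ?ext_alloc_ge0.
have [x'k_ge0 _] := andP (x'_range k).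
apply: le_trans (_ : t * x' k <= _); last by rewrite ler_wpM2l ?le_ext_alloc.
by rewrite ler_wpM2r // gerBl.
Qed.

Lemma ext_rev_nondecr : {homo ext_rev : s t / s <= t}.
Proof.
move=> s t s_le_t; have [s_lt0 | s_ge0] := ltP s 0.
  rewrite {1}/ext_rev; have [-> ->] := ext_alloc_util_neg s_lt0.
  by rewrite mulr0 subr0 ext_rev_ge0.
have alloc_gain : s * ext_alloc s <= s * ext_alloc t.
  by rewrite ler_wpM2l ?ext_alloc_nondecr.
suff : ext_util t <= ext_util s + (t - s) * ext_alloc t by rewrite /ext_rev; lra.
apply: bigmax_le => [|k /andP[v'k_ge0 v'k_le_t]].
  by rewrite addr_ge0 ?mulr_ge0 ?ext_util_ge0 ?ext_alloc_ge0 ?subr_ge0.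
have [x'k_ge0 _] := andP (x'_range k).
have -> : (t - v' k) * x' k = (s - v' k) * x' k + (t - s) * x' k by lra.
by rewrite lerD ?le_ext_util // ler_wpM2l ?subr_ge0 ?le_ext_alloc.
Qed.

Lemma ext_mech_feasible {m : nat} {v : 'I_m -> R} :
  (forall i j : 'I_m, (i < j)%N -> v i < v j) ->
  MB_feasible v (fun i => ext_alloc (v i)) (fun i => ext_util (v i)).
Proof.
move=> v_incr; split; [|split] => [i j j_lt_i | i | i].
- exact/ext_util_ge_deviation/ltW/v_incr.
- exact: ext_util_ge0.
- by rewrite ext_alloc_ge0 ext_alloc_le1.
Qed.

Lemma MB_obj_le_ext_rev {q' u' : 'I_m' -> R} :
  (forall i j : 'I_m', (i < j)%N -> v' i < v' j) -> (forall k, 0 <= q' k) ->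
  (forall k j : 'I_m', (j < k)%N -> (v' k - v' j) * x' j <= u' k) ->
  (forall k, 0 <= u' k) ->
  MB_obj v' q' x' u' <= \sum_k q' k * ext_rev (v' k).
Proof.
move=> v'_incr q'_ge0 u'_ge_deviation u'_ge0.
apply: ler_sum => k _; rewrite ler_wpM2l //.
have [x'k_ge0 _] := andP (x'_range k).
have [v'k_lt0 | v'k_ge0] := ltP (v' k) 0.
  apply: le_trans (ext_rev_ge0 _).
  by rewrite subr_le0 (le_trans _ (u'_ge0 k)) // mulr_le0_ge0 // ltW.
rewrite lerB ?ler_wpM2l ?le_ext_alloc //.
apply: bigmax_le => // j /andP[_ v'j_le_v'k].
have [j_lt_k | k_lt_j | /val_inj->] := ltngtP j k.
- exact: u'_ge_deviation.
- by have := lt_le_trans (v'_incr _ _ k_lt_j) v'j_le_v'k; rewrite ltxx.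
- by rewrite subrr mul0r.
Qed.

End ExtendedMechanism.

Theorem lemmaC4 (R : realFieldType)
    (m : nat) (v q : 'I_m -> R) (m' : nat) (v' q' : 'I_m' -> R) (r r' : R) :
  is_fin_dist v q -> is_fin_dist v' q' ->
  stoch_dominates v q v' q' ->
  is_MBRev v q r -> is_MBRev v' q' r' ->
  r' <= r.
Proof.
move=> [v_incr [q_gt0 _]] [v'_incr [q'_gt0 _]] dom [_ r_max].
move=> [[x' [u' [[u'_ge_deviation [u'_ge0 x'_range]] <-]]] _].
have q_ge0 i : 0 <= q i by exact: ltW.
have q'_ge0 k : 0 <= q' k by exact: ltW.
apply: le_trans
  (MB_obj_le_ext_rev v' x' x'_range v'_incr q'_ge0 u'_ge_deviation u'_ge0) _.
apply: le_trans (expectation_le_of_dominates v'_incr q_ge0 dom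
  (ext_rev_ge0 v' x' x'_range) (ext_rev_nondecr v' x' x'_range)) _.
exact: r_max (ext_mech_feasible v' x' x'_range v_incr).
Qed.
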